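(* Let $A_0=(a_1|a_2)\in\mathbb{Z}[i]^{4\times2}$ be a $2$-icube of norm $\lambda$ with $a_1$ primitive. Then $d_2(A_0)$ divides $\lambda$ in $\mathbb{Z}[i]$.
   Context: A $2$-icube of norm $\lambda>0$ is $(a_1|a_2)$ with $a_1^*a_1=a_2^*a_2=\lambda$, $a_1^*a_2=0$. A vector is primitive if its entries have no common non-unit divisor. $d_2(A_0)$ is the gcd of the $2\times2$ minors of $A_0$. *)

From HB Require Import structures.
From mathcomp Require Import all_boot all_order all_algebra all_field.
Set Implicit Arguments. Unset Strict Implicit. Unset Printing Implicit Defensive.
Import Order.TTheory GRing.Theory Num.Theory.
Local Open Scope ring_scope.

(* Gaussian integers Z[i] realised inside the algebraic complex numbers algC. *)
Definition gaussian (z : algC) : bool :=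
  ('Re z \is a Num.int) && ('Im z \is a Num.int).

Definition gdvd (d x : algC) : Prop := exists2 q, gaussian q & x = q * d.

Definition gunit (d : algC) : Prop := exists2 e, gaussian e & d * e = 1.

Definition gprimitive n (v : 'cV[algC]_n) : Prop :=
  forall d, gaussian d -> (forall k, gdvd d (v k 0)) -> gunit d.

Definition minor2 (A : 'M[algC]_(4,2)) (i j : 'I_4) : algC :=
  A i 0 * A j 1 - A i 1 * A j 0.

(* g is a gcd (in Z[i]) of the 2x2 minors of A; d_2(A) is any such g *)
Definition is_d2 (A : 'M[algC]_(4,2)) (g : algC) : Prop :=
  [/\ gaussian g,
      (forall i j : 'I_4, (i < j)%N -> gdvd g (minor2 A i j)) &
      (forall d, gaussian d ->
         (forall i j : 'I_4, (i < j)%N -> gdvd d (minor2 A i j)) -> gdvd d g)].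

Definition icube2 (A : 'M[algC]_(4,2)) (lambda : algC) : Prop :=
  [/\ forall i j, gaussian (A i j),
      0 < lambda,
      \sum_k (A k 0)^* * A k 0 = lambda,
      \sum_k (A k 1)^* * A k 1 = lambda &
      \sum_k (A k 0)^* * A k 1 = 0].

From mathcomp Require Import all_boot all_order all_algebra all_field zify ring.
From Stdlib Require Import Classical.
Set Implicit Arguments. Unset Strict Implicit. Unset Printing Implicit Defensive.
Import Order.TTheory GRing.Theory Num.Theory.
Local Open Scope ring_scope.

(* Since [a_2^* a_1 = 0] and [a_2^* a_2 = lambda], the 2x2 minors [m_ij] of [A]
   satisfy [lambda * a_j1 = - \sum_i a_i2^* m_ij], so [g = d_2(A)] divides
   [lambda * a_j1] for every [j].  The set of [x] with [g | lambda * x] is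
   closed under Euclidean remainders, and [Z[i]] is Euclidean for the norm
   [a^2 + b^2]; a descent therefore produces an element of it dividing every entry
   of [a_1].  By primitivity that element is a unit, whence [g | lambda]. *)

Lemma nearest_multiple (p N : int) : 0 < N ->
  exists q : int, - N <= 2 * (p - q * N) <= N.
Proof.
move=> N_gt0; exists ((2 * p + N) %/ (2 * N))%Z.
have := divz_eq (2 * p + N) (2 * N).
have := ltz_pmod (2 * p + N) (_ : 0 < 2 * N).
have := modz_ge0 (2 * p + N) (_ : 2 * N != 0).
set q := ((2 * p + N) %/ (2 * N))%Z; set m := ((2 * p + N) %% (2 * N))%Z.
move=> m_ge0 m_lt qmE.
have : 0 <= m by apply: m_ge0; lia.
have : m < 2 * N by apply: m_lt; lia.
lia.
Qed.

(* Division of [c + d i] by [a + b i] in coordinates: round the two coordinates of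
   [(c + d i)(a - b i) / N] to the nearest integers. *)
Lemma gauss_euclid_int (a b c d : int) : a ^+ 2 + b ^+ 2 != 0 ->
  exists q1 q2 : int,
    (c - (q1 * a - q2 * b)) ^+ 2 + (d - (q1 * b + q2 * a)) ^+ 2 < a ^+ 2 + b ^+ 2.
Proof.
set N := a ^+ 2 + b ^+ 2 => N_neq0.
have N_gt0 : 0 < N by rewrite lt_def N_neq0 addr_ge0 ?sqr_ge0.
have [q1 /andP[u_ge u_le]] := nearest_multiple (c * a + d * b) N_gt0.
have [q2 /andP[w_ge w_le]] := nearest_multiple (d * a - c * b) N_gt0.
exists q1, q2.
set u := c * a + d * b - q1 * N; set w := d * a - c * b - q2 * N.
set R := _ + _.
have RNE : R * N = u ^+ 2 + w ^+ 2 by rewrite /R /u /w /N; ring.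
have u2_le : 4 * u ^+ 2 <= N ^+ 2.
  have -> : 4 * u ^+ 2 = N ^+ 2 - (N - 2 * u) * (N + 2 * u) by ring.
  by rewrite lerBlDr lerDl mulr_ge0 //; lia.
have w2_le : 4 * w ^+ 2 <= N ^+ 2.
  have -> : 4 * w ^+ 2 = N ^+ 2 - (N - 2 * w) * (N + 2 * w) by ring.
  by rewrite lerBlDr lerDl mulr_ge0 //; lia.
rewrite ltNge; apply/negP => N_le_R.
have : N * N <= R * N by rewrite ler_wpM2r // ltW.
have : 0 < N * N by rewrite mulr_gt0.
have : 4 * (R * N) <= 2 * (N * N) by rewrite RNE -expr2; lia.
lia.
Qed.

Definition gauss (a b : int) : algC := a%:~R + 'i * b%:~R.

Lemma gaussianP z : gaussian z <-> exists a b : int, z = gauss a b.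
Proof.
split.
  case/andP => /intrP[a aE] /intrP[b bE]; exists a, b.
  by rewrite /gauss -aE -bE -algCrect.
by case=> a [b ->]; rewrite /gaussian /gauss Re_rect ?Im_rect ?realz ?intr_int.
Qed.

Lemma gaussian_gauss a b : gaussian (gauss a b).
Proof. by apply/gaussianP; exists a, b. Qed.

Lemma gaussM a b c d :
  gauss a b * gauss c d = gauss (a * c - b * d) (a * d + b * c).
Proof.
apply/eqP; rewrite -subr_eq0.
have -> : gauss a b * gauss c d - gauss (a * c - b * d) (a * d + b * c)
    = (b * d)%:~R * ('i ^+ 2 + 1) :> algC.
  by rewrite /gauss !(intrM, intrD, intrN); ring.
by rewrite sqrCi addNr mulr0.
Qed.

Lemma gaussD a b c d : gauss a b + gauss c d = gauss (a + c) (b + d).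
Proof. by rewrite /gauss !intrD; ring. Qed.

Lemma gaussN a b : - gauss a b = gauss (- a) (- b).
Proof. by rewrite /gauss !intrN; ring. Qed.

Lemma gauss_conj a b : (gauss a b)^* = gauss a (- b).
Proof. by rewrite /gauss conjC_rect ?realz // intrN mulrN. Qed.

Lemma gaussian0 : gaussian 0.
Proof.
have <- : gauss 0 0 = 0 by rewrite /gauss mulr0 addr0.
exact: gaussian_gauss.
Qed.

Lemma gaussianM x y : gaussian x -> gaussian y -> gaussian (x * y).
Proof.
by move=> /gaussianP[a [b ->]] /gaussianP[c [d ->]]; rewrite gaussM gaussian_gauss.
Qed.

Lemma gaussianD x y : gaussian x -> gaussian y -> gaussian (x + y).
Proof.
by move=> /gaussianP[a [b ->]] /gaussianP[c [d ->]]; rewrite gaussD gaussian_gauss.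
Qed.

Lemma gaussianN x : gaussian x -> gaussian (- x).
Proof. by move=> /gaussianP[a [b ->]]; rewrite gaussN gaussian_gauss. Qed.

Lemma gaussian_conj x : gaussian x -> gaussian x^*.
Proof. by move=> /gaussianP[a [b ->]]; rewrite gauss_conj gaussian_gauss. Qed.

Lemma gdvd0 g : gdvd g 0.
Proof. by exists 0; rewrite ?mul0r // gaussian0. Qed.

Lemma gdvdD g x y : gdvd g x -> gdvd g y -> gdvd g (x + y).
Proof.
by case=> p p_G -> [q q_G ->]; exists (p + q); rewrite ?mulrDl ?gaussianD.
Qed.

Lemma gdvdN g x : gdvd g x -> gdvd g (- x).
Proof. by case=> p p_G ->; exists (- p); rewrite ?mulNr ?gaussianN. Qed.

Lemma gdvdMl g c x : gaussian c -> gdvd g x -> gdvd g (c * x).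
Proof. by move=> c_G [p p_G ->]; exists (c * p); rewrite ?mulrA ?gaussianM. Qed.

Lemma gdvd_sum (T : finType) g (F : T -> algC) :
  (forall i, gdvd g (F i)) -> gdvd g (\sum_i F i).
Proof. by move=> dvdF; apply: big_ind => //; [exact: gdvd0 | exact: gdvdD]. Qed.

Lemma gauss_euclid (x : algC) (a b : int) : gaussian x -> gauss a b != 0 ->
  exists q r s, [/\ gaussian q, x - q * gauss a b = gauss r s
                  & r ^+ 2 + s ^+ 2 < a ^+ 2 + b ^+ 2].
Proof.
move=> /gaussianP[c [d ->]] ab_neq0.
have N_neq0 : a ^+ 2 + b ^+ 2 != 0.
  apply: contra_neq ab_neq0 => N0.
  have a0 : a = 0 by have := sqr_ge0 a; have := sqr_ge0 b; nia.
  have b0 : b = 0 by have := sqr_ge0 a; have := sqr_ge0 b; nia.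
  by rewrite a0 b0 /gauss mulr0 addr0.
have [q1 [q2 lt_N]] := gauss_euclid_int c d N_neq0.
exists (gauss q1 q2), (c - (q1 * a - q2 * b)), (d - (q1 * b + q2 * a)).
by split; rewrite ?gaussian_gauss // gaussM gaussN gaussD; congr gauss; ring.
Qed.

Section EuclideanDescent.

Variables (T : Type) (I : algC -> Prop) (v : T -> algC).
Hypothesis I_sub : forall x y q, I x -> I y -> gaussian q -> I (x - q * y).
Hypothesis v_gauss : forall j, gaussian (v j).
Hypothesis v_in : forall j, I (v j).

(* A nonzero element of [I] of least norm divides every [v j]: otherwise the
   remainder of the division would be a smaller nonzero element of [I]. *)
Lemma gideal_common_divisor x : gaussian x -> x != 0 -> I x ->
  exists y, [/\ gaussian y, I y & forall j, gdvd y (v j)].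
Proof.
move=> /gaussianP[a [b ->]].
have [k] := ubnP `|(a ^+ 2 + b ^+ 2)%R|%N; elim: k a b => // k IHk a b.
rewrite ltnS => N_le ab_neq0 ab_in.
case: (classic (exists j, ~ gdvd (gauss a b) (v j))) => [[j ndvd_j]|dvd_all];
  last first.
  exists (gauss a b); split; rewrite ?gaussian_gauss // => j.
  by apply: NNPP => ndvd; apply: dvd_all; exists j.
have [q [r [s [q_G rsE lt_rs]]]] := gauss_euclid (v_gauss j) ab_neq0.
have rs_neq0 : gauss r s != 0.
  apply/eqP => rs0; apply: ndvd_j; exists q => //.
  by apply/eqP; rewrite -subr_eq0 rsE rs0.
apply: (IHk r s) => //; last by rewrite -rsE; apply: I_sub.
have := sqr_ge0 r; have := sqr_ge0 s; lia.
Qed.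

End EuclideanDescent.

Lemma gdvd_primitiveM n g lambda (v : 'cV[algC]_n) :
  gprimitive v -> (forall k, gaussian (v k 0)) -> v != 0 ->
  (forall k, gdvd g (lambda * v k 0)) -> gdvd g lambda.
Proof.
move=> v_prim v_gauss v_neq0 dvd_v.
pose I x := gdvd g (lambda * x).
have I_sub x y q : I x -> I y -> gaussian q -> I (x - q * y).
  move=> Ix Iy q_G; rewrite /I mulrBr mulrCA.
  by apply: gdvdD => //; apply/gdvdN/gdvdMl.
have [k vk_neq0] : exists k, v k 0 != 0.
  apply/existsP; apply: contraNT v_neq0 => /existsPn v0.
  by apply/eqP/matrixP => i j; rewrite (ord1 j) mxE; apply/eqP/negbNE/v0.
have [y [y_G [p p_G lambda_yE] dvd_y]] :=
  gideal_common_divisor (v := fun k => v k 0) I_sub v_gauss dvd_v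
    (v_gauss k) vk_neq0 (dvd_v k).
have [e e_G ye1] := v_prim y y_G dvd_y.
exists (e * p); first exact: gaussianM.
by rewrite -[lambda]mulr1 -ye1 mulrA lambda_yE; ring.
Qed.

Lemma is_d2_dvd_minor2 A g : is_d2 A g -> forall i j, gdvd g (minor2 A i j).
Proof.
case=> _ dvd_minor _ i j; case: (ltngtP i j) => [/dvd_minor //|ji|/val_inj ->].
- have -> : minor2 A i j = - minor2 A j i by rewrite /minor2; ring.
  exact/gdvdN/dvd_minor.
- by rewrite /minor2 mulrC subrr; exact: gdvd0.
Qed.

Lemma minor2_cofactor_sum (A : 'M[algC]_(4, 2)) lambda j :
  \sum_k (A k 1)^* * A k 1 = lambda -> \sum_k (A k 0)^* * A k 1 = 0 ->
  lambda * A j 0 = - \sum_i (A i 1)^* * minor2 A i j.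
Proof.
move=> norm1 orth.
have orth' : \sum_k (A k 1)^* * A k 0 = 0.
  have -> : \sum_k (A k 1)^* * A k 0 = (\sum_k (A k 0)^* * A k 1)^*.
    by rewrite rmorph_sum; apply: eq_bigr => k _; rewrite rmorphM /= conjCK mulrC.
  by rewrite orth rmorph0.
have -> : \sum_i (A i 1)^* * minor2 A i j
    = (\sum_i (A i 1)^* * A i 0) * A j 1 - (\sum_i (A i 1)^* * A i 1) * A j 0.
  by rewrite !mulr_suml -sumrB; apply: eq_bigr => i _; rewrite /minor2; ring.
by rewrite orth' norm1; ring.
Qed.

Lemma icube2_col0_neq0 A lambda : icube2 A lambda -> col 0 A != 0.
Proof.
case=> _ lambda_gt0 norm0 _ _; apply: contraTneq lambda_gt0 => col0.
rewrite -norm0 big1 ?ltxx // => k _.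
by have := congr1 (fun M : 'cV_4 => M k 0) col0; rewrite !mxE => ->; rewrite mulr0.
Qed.

Theorem mainTheorem19 (A : 'M[algC]_(4,2)) (lambda : algC) :
  icube2 A lambda -> gprimitive (col 0 A) ->
  forall g, is_d2 A g -> gdvd g lambda.
Proof.
move=> icubeA a1_prim g d2g; have [A_G _ _ norm1 orth] := icubeA.
apply: (gdvd_primitiveM a1_prim) => [k | | k].
- by rewrite mxE A_G.
- exact: icube2_col0_neq0 icubeA.
rewrite mxE (minor2_cofactor_sum k norm1 orth); apply/gdvdN/gdvd_sum => i.
exact/gdvdMl/is_d2_dvd_minor2/d2g/gaussian_conj.
Qed.
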